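(* Let $G=(V,E,C,\ell)$ be an edge-labeled graph with $V=\{1,\dots,n\}$ and two categories $C=\{1,2\}$. Construct a directed graph $G'$ with unit arc capacities (parallel arcs allowed, capacities added) on node set $V\cup\{s,t\}$: for every edge $\{i,j\}\in E$ with $i<j$, if $\ell(\{i,j\})=1$ add the arcs $(i,j)$ and $(j,t)$, and if $\ell(\{i,j\})=2$ add the arcs $(i,j)$ and $(s,i)$. Let $S^*\subseteq V\cup\{s,t\}$ with $s\in S^*$, $t\notin S^*$ minimize the total capacity of arcs $(a,b)$ with $a\in S^*$, $b\notin S^*$. Define the clustering $Y^*$ by $Y^*[i]=2$ if $i\in S^*$ and $Y^*[i]=1$ if $i\notin S^*$. Then $Y^*$ minimizes $\mathrm{CatEdgeClus}$ over all clusterings $V\to C$.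
   Context: An edge-labeled graph $G=(V,E,C,\ell)$ consists of a finite node set $V$, a finite collection $E$ of edges (2-element subsets of $V$), a set $C$ of categories, and a labeling $\ell:E\to C$. For a clustering $Y:V\to C$, $m_Y(e)=1$ if some endpoint $i\in e$ has $Y[i]\neq\ell(e)$, else $0$; $\mathrm{CatEdgeClus}(Y)=\sum_{e\in E}m_Y(e)$. *)

From mathcomp Require Import all_boot.
Set Implicit Arguments. Unset Strict Implicit. Unset Printing Implicit Defensive.

Inductive categ := cat1 | cat2.
Definition cat_eqb (a b : categ) : bool :=
  match a, b with cat1, cat1 | cat2, cat2 => true | _, _ => false end.

(* An edge {i,j} with i < j together with its label: ((i, j), l). The
   edge collection E is a finite list (multiset, parallel edges allowed). *)
Definition edge n := ('I_n * 'I_n * categ)%type.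

Definition edges_ok n (E : seq (edge n)) : bool :=
  all (fun e : edge n => (e.1.1 < e.1.2)%N) E.

Definition mistake n (Y : 'I_n -> categ) (e : edge n) : bool :=
  ~~ cat_eqb (Y e.1.1) e.2 || ~~ cat_eqb (Y e.1.2) e.2.

Definition CatEdgeClus n (E : seq (edge n)) (Y : 'I_n -> categ) : nat :=
  count (mistake Y) E.

Definition node n := ('I_n + bool)%type.
Definition src n : node n := inr true.
Definition snk n : node n := inr false.

Definition arcs_of_edge n (e : edge n) : seq (node n * node n) :=
  let: (i, j, l) := e in
  match l with
  | cat1 => [:: (inl i, inl j); (inl j, snk n)]
  | cat2 => [:: (inl i, inl j); (src n, inl i)]
  end.

Definition arcs n (E : seq (edge n)) : seq (node n * node n) :=
  flatten (map (@arcs_of_edge n) E).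

Definition cut_cap n (E : seq (edge n)) (S : {set node n}) : nat :=
  count (fun a : node n * node n => (a.1 \in S) && (a.2 \notin S)) (arcs E).

Definition st_cut n (S : {set node n}) : Prop :=
  src n \in S /\ snk n \notin S.

Definition min_st_cut n (E : seq (edge n)) (S : {set node n}) : Prop :=
  st_cut S /\ forall S' : {set node n}, st_cut S' -> cut_cap E S <= cut_cap E S'.

Definition clustering_of_cut n (S : {set node n}) : 'I_n -> categ :=
  fun i => if inl i \in S then cat2 else cat1.

From mathcomp Require Import all_boot.

Set Implicit Arguments.
Unset Strict Implicit.
Unset Printing Implicit Defensive.

(* Every s-t cut S encodes the clustering "vertices in S get category 2", and
   conversely; under this correspondence each edge contributes to the cut
   capacity exactly as much as it contributes to CatEdgeClus: a 1-labelled
   edge {i,j} is cut iff i or j is in S (once through (i,j) when only i is,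
   once through (j,t) when j is), symmetrically for 2-labelled edges.  Hence
   the capacity of a cut equals the number of mistakes of its clustering, and
   a minimum cut yields a minimum clustering. *)

Section CutClustering.

Variable n : nat.
Implicit Types (E : seq (edge n)) (S : {set node n}) (Y : 'I_n -> categ).

Definition cut_of_clustering Y : {set node n} :=
  [set x : node n | if x is inl i then cat_eqb (Y i) cat2 else x == src n].

Lemma st_cut_of_clustering Y : st_cut (cut_of_clustering Y).
Proof. by split; rewrite inE. Qed.

Lemma clustering_of_cutK Y : clustering_of_cut (cut_of_clustering Y) =1 Y.
Proof. by move=> i; rewrite /clustering_of_cut inE; case: (Y i). Qed.

Lemma eq_CatEdgeClus E Y Y' : Y =1 Y' -> CatEdgeClus E Y = CatEdgeClus E Y'.
Proof. by move=> eqY; apply: eq_count => e; rewrite /mistake !eqY. Qed.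

Lemma cut_cap_arcs_of_edge S e : st_cut S ->
  count (fun a : node n * node n => (a.1 \in S) && (a.2 \notin S))
        (arcs_of_edge e)
  = mistake (clustering_of_cut S) e.
Proof.
case: e => [[i j] []] [s_in t_notin];
  rewrite /mistake /clustering_of_cut /= ?s_in ?t_notin;
  by case: (inl i \in S); case: (inl j \in S).
Qed.

Lemma cut_capE E S : st_cut S -> cut_cap E S = CatEdgeClus E (clustering_of_cut S).
Proof.
move=> stS; rewrite /cut_cap /arcs /CatEdgeClus.
by elim: E => //= e E IH; rewrite count_cat IH cut_cap_arcs_of_edge.
Qed.

End CutClustering.

Theorem mainTheorem11 (n : nat) (E : seq (edge n)) (S : {set node n}) :
  edges_ok E -> min_st_cut E S ->
  forall Y : 'I_n -> categ,
    CatEdgeClus E (clustering_of_cut S) <= CatEdgeClus E Y.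
Proof.
move=> _ [stS S_min] Y.
have stY := st_cut_of_clustering Y.
rewrite -cut_capE // -(eq_CatEdgeClus E (clustering_of_cutK Y)) -cut_capE //.
exact: S_min.
Qed.
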